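(* Let $SG=(G,\sigma)$ be an unbalanced signed graph and let $n_b$ be the minimum number of edges of a negative circuit of $SG$. Then for every $i\le n_b-2$, $$H^i(SG)\cong H^i(G)\cong H^i_b(SG)$$ as graded abelian groups.
   Context: Signed graphs: $SG=(G,\sigma)$, $G$ finite (loops, multiple edges allowed), $\sigma:E(G)\to\{\pm1\}$. A circuit (a loop counts as a circuit with one edge) is negative if the product of its edge signs is $-1$; balanced = no negative circuit. $[G:s]$, $[SG:s]$: spanning subgraph with edge set $s$. Complexes: Fix a total order on $E(G)$. An enhanced state of $G$ is $S=(s,c)$, $c$ labels each component of $[G:s]$ by $1$ or $x$; $j(S)$ = number of $x$-labels (grading). With $m(1,1)=1$, $m(1,x)=m(x,1)=x$, $m(x,x)=0$: for $e\notin s$, $S_e=(s\cup\{e\},c_e)$ where a component containing both ends of $e$ keeps its label and if $e$ joins components $E_i,E_j$ the merged one gets $m(c(E_i),c(E_j))$ ($S_e=0$ if both are $x$). $d(S)=\sum_{e\notin s}(-1)^{n(e)}S_e$, $n(e)$ = number of edges of $s$ preceding $e$. $H^i(G)$: cohomology of $(C^\bullet(G),d)$, $C^i(G)$ free on all enhanced states with $|s|=i$ (chromatic cohomology of the unsigned graph). $H^i(SG)$: cohomology of $C^\bullet(SG)$, free on enhanced states whose $c$ assigns $1$ to every unbalanced component of $[SG:s]$, with $d_s=f\circ d$ where $f$ projects onto these states. $H^i_b(SG)$: cohomology of $C^\bullet_b(SG)$, free on enhanced states with $[SG:s]$ balanced, with $d_b=f_b\circ d$, $f_b$ the analogous projection.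 *)

From mathcomp Require Import all_boot all_order all_algebra.
Set Implicit Arguments. Unset Strict Implicit. Unset Printing Implicit Defensive.
Import GRing.Theory.
Local Open Scope ring_scope.

(* A finite signed graph (loops and multiple edges allowed).
   [ends e = (u, v)] gives the two endpoints of edge e (u = v for a loop).
   [neg e = true] iff sigma(e) = -1, [neg e = false] iff sigma(e) = +1.
   The total order on E(G) is the enumeration order of the finType [edge]
   (compared through [enum_rank]). *)
Record sgraph := SGraph {
  vert : finType;
  edge : finType;
  ends : edge -> vert * vert;
  neg : edge -> bool }.

Section SignedGraphs.
Variable G : sgraph.
Local Notation V := (vert G).
Local Notation E := (edge G).

Definition sigma (e : E) : int := if neg e then -1 else 1.

Definition joins (e : E) (a b : V) : bool :=
  (ends e == (a, b)) || (ends e == (b, a)).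

Definition adj (s : {set E}) : rel V :=
  fun u v => [exists e in s, joins e u v].

Definition conn (s : {set E}) (u v : V) : bool := connect (adj s) u v.

Definition comps (s : {set E}) : {set {set V}} :=
  equivalence_partition (conn s) [set: V].

(* C is (the edge set of) a circuit: distinct vertices v_0..v_{k-1} and
   distinct edges e_0..e_{k-1}, k >= 1, with e_i joining v_i and v_{i+1 mod k}.
   A loop is a circuit with one edge. *)
Definition is_circuit (C : {set E}) : bool :=
  [exists k : 'I_(#|E|).+1, (0 < k)%N &&
    [exists vs : k.-tuple V, [exists es : k.-tuple E,
      [&& uniq vs, uniq es, C == [set e in es] &
          [forall i : 'I_k,
             joins (tnth es i) (tnth vs i) (nth (tnth vs i) vs ((i + 1) %% k))]]]]].

Definition neg_circuit (C : {set E}) : bool :=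
  is_circuit C && (\prod_(e in C) sigma e == -1).

Definition balanced (s : {set E}) : bool :=
  ~~ [exists C : {set E}, (C \subset s) && neg_circuit C].

Definition unbal_at (s : {set E}) (x : V) : bool :=
  [exists C : {set E}, [&& C \subset s, neg_circuit C &
     [exists e in C, conn s x (ends e).1]]].

(* Enhanced states: pairs (s, c) with c : V -> bool constant on the
   components of [G:s]; c v = true means the component of v is labelled x,
   false means labelled 1. The ambient finite type of candidates: *)
Definition state := ({set E} * {ffun V -> bool})%type.

Definition valid (S : state) : bool :=
  [forall u, forall v, conn S.1 u v ==> (S.2 u == S.2 v)].

Definition jdeg (S : state) : nat :=
  #|[set K in comps S.1 | [exists v in K, S.2 v]]|.

(* S_e (None stands for S_e = 0), for e not in s *)
Definition next (S : state) (e : E) : option state :=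
  let s := S.1 in let c := S.2 in
  let u := (ends e).1 in let v := (ends e).2 in
  if conn s u v then Some (e |: s, c)
  else if c u && c v then None
  else Some (e |: s, [ffun y => if conn s u y || conn s v y
                              then c u || c v else c y]).

Definition nprec (s : {set E}) (e : E) : nat :=
  #|[set f in s | (enum_rank f < enum_rank e)%N]|.

(* coefficient of S' in d(S) *)
Definition coef (S S' : state) : int :=
  \sum_(e | e \notin S.1)
     (if next S e == Some S' then (-1) ^+ nprec S.1 e else 0).

Definition cochain := {ffun state -> int}.

Definition dd (x : cochain) : cochain :=
  [ffun S' => \sum_S x S * coef S S'].

(* Complexes: given a predicate P on states (the allowed basis states of
   a given j-degree), the degree-i cochain group is the free abelian group
   on the states S with P S and |s| = i, and the differential is the
   projection onto allowed states of d. *)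
Definition Cdeg (P : pred state) (i : nat) : pred state :=
  fun S => P S && (#|S.1| == i).

Definition supp (Q : pred state) (x : cochain) : Prop :=
  forall S, ~~ Q S -> x S = 0.

Definition dmask (Q : pred state) (x : cochain) : cochain :=
  [ffun S => if Q S then dd x S else 0].

Definition cocycle (P : pred state) (i : nat) (x : cochain) : Prop :=
  supp (Cdeg P i) x /\ dmask (Cdeg P i.+1) x = 0.

Definition coboundary (P : pred state) (i : nat) (x : cochain) : Prop :=
  exists y, supp (fun S => P S && (#|S.1|.+1 == i)) y /\
            x = dmask (Cdeg P i) y.

Definition PG (j : nat) : pred state := fun S => valid S && (jdeg S == j).
Definition PS (j : nat) : pred state :=
  fun S => PG j S && [forall v, S.2 v ==> ~~ unbal_at S.1 v].
Definition PB (j : nat) : pred state := fun S => PG j S && balanced S.1.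

End SignedGraphs.
Arguments PG : clear implicits.
Arguments PS : clear implicits.
Arguments PB : clear implicits.

(* H^i_P ~= H^i_Q as abelian groups, where H^i = Z^i / B^i: there is a group
   homomorphism phi (given on cochains) inducing a well-defined bijective
   homomorphism Z^i_P / B^i_P -> Z^i_Q / B^i_Q. *)
Definition H_iso (G : sgraph) (P Q : pred (state G)) (i : nat) : Prop :=
  exists phi : cochain G -> cochain G,
    [/\ forall x y, phi (x + y) = phi x + phi y,
        forall x, cocycle P i x -> cocycle Q i (phi x),
        forall x, coboundary P i x -> coboundary Q i (phi x),
        forall x, cocycle P i x -> coboundary Q i (phi x) -> coboundary P i x
      & forall z, cocycle Q i z ->
          exists2 x, cocycle P i x & coboundary Q i (z - phi x)].

From mathcomp Require Import all_boot all_order all_algebra.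
Import GRing.Theory.
Local Open Scope ring_scope.

(* The cohomology group H^i of a complex built from a basis
   predicate P only involves the basis states with |s| = i - 1, i, i + 1:
   cocycles live in degree i, coboundaries come from degree i - 1, and the
   cocycle condition looks at degree i + 1.  Hence two predicates P and Q
   agreeing on all states with |s| <= i + 1 have literally the same
   cocycles and coboundaries in degree i, and the identity is an
   isomorphism H^i_P ~= H^i_Q (lemma [H_iso_of_agree]).
   On the signed-graph side, a spanning subgraph [SG:s] with fewer edges
   than the shortest negative circuit is balanced, and then no component
   is unbalanced.  So for |s| <= i + 1 < n_b the predicates PS, PG and PB
   all coincide, and Proposition 5.1 follows from [H_iso_of_agree]. *)

Section ComplexesAgreeingInLowDegree.
Variable G : sgraph.
Implicit Types (A B : pred (state G)) (x : cochain G).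

Lemma supp_ext {A B} x : A =1 B -> supp A x -> supp B x.
Proof. by move=> AB hx S; rewrite -AB; apply: hx. Qed.

Lemma dmask_ext {A B} x : A =1 B -> dmask A x = dmask B x.
Proof. by move=> AB; apply/ffunP=> S; rewrite !ffunE AB. Qed.

Section Agreement.
Variables (P Q : pred (state G)) (i : nat).
Hypothesis PQ : forall S : state G, (#|S.1| <= i.+1)%N -> P S = Q S.

Lemma Cdeg_agree {k} : (k <= i.+1)%N -> Cdeg P k =1 Cdeg Q k.
Proof.
move=> hk S; rewrite /Cdeg; case: eqP => [hS|]; last by rewrite !andbF.
by rewrite PQ // hS.
Qed.

Lemma cocycle_agree x : cocycle P i x <-> cocycle Q i x.
Proof.
rewrite /cocycle (dmask_ext x (Cdeg_agree (leqnn i.+1))).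
have Ei := Cdeg_agree (leqnSn i).
by split=> -[hsupp hd]; split=> //; apply: supp_ext hsupp => S; rewrite Ei.
Qed.

Lemma coboundary_agree x : coboundary P i x <-> coboundary Q i x.
Proof.
have Ei := Cdeg_agree (leqnSn i).
have Eprev : (fun S : state G => P S && (#|S.1|.+1 == i)) =1
             (fun S => Q S && (#|S.1|.+1 == i)).
  move=> S; case: eqP => [hS|]; last by rewrite !andbF.
  by rewrite PQ // -hS ltnW.
rewrite /coboundary; split=> -[y [hsupp ->]]; exists y; split.
- exact: supp_ext hsupp.
- exact: dmask_ext.
- by apply: supp_ext hsupp => S; rewrite Eprev.
- by apply: dmask_ext => S; rewrite Ei.
Qed.

Lemma coboundary0 : coboundary Q i 0.
Proof.
have zeroE (S : state G) : (0 : cochain G) S = 0 by rewrite ffunE.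
exists 0; split; first by move=> S _; rewrite zeroE.
apply/ffunP => S; rewrite zeroE ffunE; case: (Cdeg Q i S) => //.
by rewrite ffunE big1 // => T _; rewrite zeroE mul0r.
Qed.

Lemma H_iso_of_agree : H_iso P Q i.
Proof.
exists id; split=> //.
- by move=> x /cocycle_agree.
- by move=> x /coboundary_agree.
- by move=> x _ /coboundary_agree.
by move=> z /cocycle_agree hz; exists z => //; rewrite subrr; apply: coboundary0.
Qed.

End Agreement.
End ComplexesAgreeingInLowDegree.

Section ShortSubgraphsAreBalanced.
Variable G : sgraph.
Implicit Types s : {set edge G}.

Lemma balanced_of_short s :
  (forall C : {set edge G}, neg_circuit C -> (#|s| < #|C|)%N) -> balanced s.
Proof.
move=> short; apply/existsP => -[C /andP [sub negC]].
by have := leq_trans (short C negC) (subset_leq_card sub); rewrite ltnn.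
Qed.

Lemma balanced_not_unbal_at s v : balanced s -> ~~ unbal_at s v.
Proof.
move=> /existsPn bal; apply/existsP => -[C /and3P [sub negC _]].
by have := bal C; rewrite sub negC.
Qed.

Lemma PS_balanced j (S : state G) : balanced S.1 -> PS G j S = PG G j S.
Proof.
move=> bal; rewrite /PS; case: (PG G j S) => //=.
by apply/forallP => v; rewrite balanced_not_unbal_at ?implybT.
Qed.

Lemma PB_balanced j (S : state G) : balanced S.1 -> PB G j S = PG G j S.
Proof. by move=> bal; rewrite /PB bal andbT. Qed.

End ShortSubgraphsAreBalanced.

Theorem proposition5p1 (G : sgraph) (nb : nat) :
  (exists C : {set edge G}, neg_circuit C /\ #|C| = nb) ->
  (forall C : {set edge G}, neg_circuit C -> (nb <= #|C|)%N) ->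
  forall i : nat, (i + 2 <= nb)%N ->
  forall j : nat,
    H_iso (PS G j) (PG G j) i /\ H_iso (PG G j) (PB G j) i.
Proof.
move=> _ nb_min i hi j.
have bal (S : state G) : (#|S.1| <= i.+1)%N -> balanced S.1.
  move=> hS; apply: balanced_of_short => C negC.
  by apply: leq_trans (nb_min C negC); apply: leq_ltn_trans hS _; rewrite -addn2.
split; apply: H_iso_of_agree => S hS.
- exact: PS_balanced (bal S hS).
- by rewrite PB_balanced // bal.
Qed.
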